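(* Let $\bar B\subset\Sigma_2$ be a proper real trigonal curve. Then the set of non-separating real proper sections (with respect to $\bar B$), regarded as a subset of the affine space $\{(a,b,c)\in\mathbb R^3\}$ of real proper sections $y=ax^2+bx+c$, has exactly two connected components $\mathcal S_+$ and $\mathcal S_-$, each of which is nonempty, open and convex.
   Context: $\Sigma_2$ is the Hirzebruch surface of degree $2$ with exceptional section $E$ ($E^2=-2$), with its standard real structure. Use real affine coordinates $(x,y)$ in which $E$ is $\{y=\infty\}$; near the fiber $x=\infty$ use $u=1/x$, $v=y/x^2$. A proper section is a section disjoint from $E$; a real proper section has the form $y=ax^2+bx+c$ with $a,b,c\in\mathbb R$ (near $x=\infty$: $v=a+bu+cu^2$). A proper trigonal curve is a curve $\bar B\subset\Sigma_2$ disjoint from $E$ given by $y^3+y^2p_2(x)+yp_4(x)+p_6(x)=0$ with $\deg p_d\le d$; it is real if the $p_d$ have real coefficients. For a real proper section $L$, the complement $(\Sigma_2)_{\mathbb R}\setminus(L_{\mathbb R}\cup E_{\mathbb R})$ has two regions (chessboard coloring); $L$ is non-separating with respect to $\bar B$ if $\bar B_{\mathbb R}$ lies entirely in one of these two regions. *)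

From HB Require Import structures.
From mathcomp Require Import all_boot all_order all_algebra.
From mathcomp Require Import all_classical all_reals all_analysis.
Set Implicit Arguments. Unset Strict Implicit. Unset Printing Implicit Defensive.
Import Order.TTheory GRing.Theory Num.Theory.
Import numFieldNormedType.Exports.
Local Open Scope classical_set_scope.
Local Open Scope ring_scope.

(* A real proper trigonal curve in Sigma_2:
     y^3 + y^2 p2(x) + y p4(x) + p6(x) = 0,  deg p_d <= d, real coefficients. *)
Record trigonal (R : realType) := Trigonal {
  tp2 : {poly R}; tp4 : {poly R}; tp6 : {poly R};
  tp2_deg : (size tp2 <= 3)%N;
  tp4_deg : (size tp4 <= 5)%N;
  tp6_deg : (size tp6 <= 7)%N }.

Definition trig_eq (R : realType) (B : trigonal R) (x y : R) : R :=
  y ^+ 3 + y ^+ 2 * (tp2 B).[x] + y * (tp4 B).[x] + (tp6 B).[x].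

(* Equation of B in the chart (u,v) = (1/x, y/x^2), restricted to the fiber
   u = 0 (the fiber x = infinity): v^3 + v^2 [x^2]p2 + v [x^4]p4 + [x^6]p6. *)
Definition trig_eq_inf (R : realType) (B : trigonal R) (v : R) : R :=
  v ^+ 3 + v ^+ 2 * (tp2 B)`_2 + v * (tp4 B)`_4 + (tp6 B)`_6.

(* Real points of B:  affine real points (x,y), plus real points (u=0, v) on
   the fiber at infinity.  (B is disjoint from E, so these are all of B_R.) *)

(* Coordinates of a real proper section  y = a x^2 + b x + c,  (a,b,c) in R^3. *)
Definition sec_a (R : realType) (s : 'rV[R]_3) : R := s ord0 (@Ordinal 3 0 isT).
Definition sec_b (R : realType) (s : 'rV[R]_3) : R := s ord0 (@Ordinal 3 1 isT).
Definition sec_c (R : realType) (s : 'rV[R]_3) : R := s ord0 (@Ordinal 3 2 isT).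

(* The two regions of (Sigma_2)_R \ (L_R u E_R):
   "above" L :  { y > a x^2 + b x + c }  u  { u = 0, v > a },
   "below" L :  { y < a x^2 + b x + c }  u  { u = 0, v < a }.
   (In the chart (u,v), y - (a x^2+bx+c) = x^2 (v - (a + b u + c u^2)),
   so these descriptions agree on the overlap of the charts.)
   B_R lies in the region above (resp. below) L: *)
Definition B_above (R : realType) (B : trigonal R) (s : 'rV[R]_3) : Prop :=
  (forall x y : R, trig_eq B x y = 0 ->
     sec_a s * x ^+ 2 + sec_b s * x + sec_c s < y) /\
  (forall v : R, trig_eq_inf B v = 0 -> sec_a s < v).

Definition B_below (R : realType) (B : trigonal R) (s : 'rV[R]_3) : Prop :=
  (forall x y : R, trig_eq B x y = 0 ->
     y < sec_a s * x ^+ 2 + sec_b s * x + sec_c s) /\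
  (forall v : R, trig_eq_inf B v = 0 -> v < sec_a s).

Definition non_separating (R : realType) (B : trigonal R) (s : 'rV[R]_3) : Prop :=
  B_above B s \/ B_below B s.

Definition nonsep_set (R : realType) (B : trigonal R) : set 'rV[R]_3 :=
  [set s | non_separating B s].

From HB Require Import structures.
From mathcomp Require Import all_boot all_order all_algebra.
From mathcomp Require Import all_classical all_reals all_analysis.
From mathcomp Require Import ring lra.
Set Implicit Arguments. Unset Strict Implicit. Unset Printing Implicit Defensive.
Import Order.TTheory GRing.Theory Num.Theory.
Import numFieldNormedType.Exports.
Local Open Scope classical_set_scope.
Local Open Scope ring_scope.

(** The real part of B is compact in Sigma_2: it is covered by the two patches
    |x| <= 1 and |1/x| <= 1, and over either patch it is the real zero set of a
    monic cubic in the fiber coordinate whose coefficients are bounded, so its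
    points have bounded fiber coordinate.  Hence "B_R lies strictly above L" is
    an open condition on (a, b, c), and it is convex since it is a family of
    strict linear inequalities; a section that is low enough satisfies it.
    Reflecting y |-> -y turns "below" into "above".  The two conditions
    exclude each other because the fiber at infinity meets B in a real point
    (a real cubic has a real root), so the non-separating sections form two
    disjoint open convex sets, which are therefore its connected components. *)

Section MonicCubic.
Variable R : realType.
Implicit Types a b c z : R.

Definition cubic a b c z : R := z ^+ 3 + z ^+ 2 * a + z * b + c.

Lemma norm_cubic_sub_cube a b c z : 1 <= `|z| ->
  `|cubic a b c z - z ^+ 3| <= (`|a| + `|b| + `|c|) * `|z| ^+ 2.
Proof.
move=> z1; have z0 : 0 <= `|z| by exact: le_trans z1.
have zz2 : `|z| <= `|z| ^+ 2 by rewrite expr2 ler_peMl.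
have z12 : 1 <= `|z| ^+ 2 by exact: le_trans zz2.
have -> : cubic a b c z - z ^+ 3 = z ^+ 2 * a + (z * b + c) by rewrite /cubic; ring.
have t1 := ler_normD (z ^+ 2 * a) (z * b + c).
have t2 := ler_normD (z * b) c.
have ta : `|z ^+ 2 * a| = `|a| * `|z| ^+ 2 by rewrite normrM normrX mulrC.
have tb : `|z * b| <= `|b| * `|z| ^+ 2 by rewrite normrM mulrC ler_wpM2l.
have tc : `|c| <= `|c| * `|z| ^+ 2 by rewrite ler_peMr.
rewrite !mulrDl; lra.
Qed.

Lemma cubic_root_bound a b c z : cubic a b c z = 0 ->
  `|z| <= 1 + (`|a| + `|b| + `|c|).
Proof.
move=> root; set S := _ + _ + _.
have S0 : 0 <= S by rewrite /S !addr_ge0.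
have [z1|z1] := leP `|z| 1; first by apply: le_trans z1 _; rewrite lerDl.
have z0 : 0 < `|z| by exact: lt_trans z1.
have := norm_cubic_sub_cube a b c (ltW z1); rewrite root sub0r normrN normrX.
rewrite exprS ler_pM2r ?exprn_gt0 // => zS.
by apply: le_trans zS _; rewrite lerDr.
Qed.

Lemma cubic_has_root a b c : exists z, cubic a b c z = 0.
Proof.
set S := `|a| + `|b| + `|c|; set K := 1 + S.
have S0 : 0 <= S by rewrite /S !addr_ge0.
have K0 : 0 <= K by rewrite /K addr_ge0.
have K1 : 1 <= `|K| by rewrite ger0_norm // lerDl.
have K3 : K ^+ 3 = K ^+ 2 + S * K ^+ 2 by rewrite /K; ring.
have K2 : 0 <= K ^+ 2 := exprn_ge0 2 K0.
have fK : 0 <= cubic a b c K.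
  have := norm_cubic_sub_cube a b c K1.
  by rewrite -/S (ger0_norm K0) ler_norml => /andP[h _]; lra.
have fNK : cubic a b c (- K) <= 0.
  have : 1 <= `|- K| by rewrite normrN.
  move/(norm_cubic_sub_cube a b c).
  rewrite -/S normrN (ger0_norm K0) ler_norml => /andP[_].
  have -> : (- K) ^+ 3 = - K ^+ 3 by ring.
  lra.
pose P : {poly R} := 'X ^+ 3 + 'X ^+ 2 * a%:P + 'X * b%:P + c%:P.
have PE z : P.[z] = cubic a b c z by rewrite /P /cubic !hornerE.
have cP : {within `[- K, K], continuous (horner P)}.
  exact/continuous_subspaceT/continuous_horner.
have NKK : - K <= K by rewrite -subr_ge0 opprK addr_ge0.
have sgn : Num.min P.[- K] P.[K] <= 0 <= Num.max P.[- K] P.[K].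
  by rewrite ge_min le_max !PE fNK fK orbT.
have [z _ Pz0] := IVT NKK cP sgn.
by exists z; rewrite -PE.
Qed.
End MonicCubic.

Section Polynomials.
Variable R : realType.
Implicit Types (p : {poly R}) (t u : R).

Lemma horner_bounded_unit p : exists M, forall t, `|t| <= 1 -> `|p.[t]| <= M.
Proof.
exists (\sum_(i < size p) `|p`_i|) => t t1; rewrite horner_coef.
apply: le_trans (ler_norm_sum _ _ _) _; apply: ler_sum => i _.
rewrite normrM normrX ler_piMr // exprn_ile1 //.
Qed.

Definition reverse_poly n p : {poly R} := \poly_(i < n.+1) p`_(n - i).

Lemma horner_reverse_poly0 n p : (reverse_poly n p).[0] = p`_n.
Proof. by rewrite horner_coef0 coef_poly subn0. Qed.

Lemma horner_reverse_poly n p u : (size p <= n.+1)%N -> u != 0 ->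
  (reverse_poly n p).[u] = u ^+ n * p.[u^-1].
Proof.
move=> sp u0; have sr : (size (reverse_poly n p) <= n.+1)%N by exact: size_poly.
rewrite (horner_coef_wide _ sr) (horner_coef_wide _ sp) mulr_sumr.
rewrite (reindex_inj rev_ord_inj); apply: eq_bigr => i _.
have ile : (i <= n)%N by rewrite -ltnS ltn_ord.
rewrite coef_poly /= subSS ltnS leq_subr subKn // exprVn mulrCA.
have -> : u ^+ n = u ^+ (n - i) * u ^+ i by rewrite -exprD subnK.
by rewrite mulfK // expf_neq0.
Qed.

End Polynomials.

Lemma convex_combination_lt (R : realDomainType) (a b r t : R) :
  0 <= t -> t <= 1 -> a < r -> b < r -> t * a + (1 - t) * b < r.
Proof.
move=> t0 t1 ar br; set m := Num.max a b.
have ta : t * a <= t * m by rewrite ler_wpM2l // le_max lexx.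
have tb : (1 - t) * b <= (1 - t) * m.
  by rewrite ler_wpM2l ?subr_ge0 // le_max lexx orbT.
have mr : m < r by rewrite gt_max ar br.
have : t * m + (1 - t) * m = m by ring.
lra.
Qed.

Local Open Scope convex_scope.

Lemma conv_rowN (R : numDomainType) n (x y : 'rV[R]_n) (l : {i01 R}) :
  - ((x : convex_lmodType 'rV[R]_n) <| l |> y) =
  ((- x : 'rV[R]_n) : convex_lmodType 'rV[R]_n) <| l |> (- y).
Proof. by apply/rowP => j; rewrite /= !mxE !mulrN opprD. Qed.

Lemma convex_set_connected (R : realType) (V : normedModType R) (A : set V) :
  @convex_set R V A -> connected A.
Proof.
move=> convA; have [[x0 Ax0]|A0] := pselect (A !=set0); last first.
  suff -> : A = set0 by exact: connected0.
  by apply/seteqP; split=> x // Ax; apply: A0; exists x.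
pose seg (y : V) := (fun t : R => t *: y + (1 - t) *: x0) @` `[0, 1]%classic.
have -> : A = \bigcup_(y in A) seg y.
  apply/seteqP; split=> [y Ay|_ [y Ay [t /andP[t0 t1] <-]]].
    exists y => //; exists 1; first by rewrite /= in_itv /= ler01 lexx.
    by rewrite subrr scale0r addr0 scale1r.
  by have := convA y x0 (Itv01 t0 t1) (mem_set Ay) (mem_set Ax0); rewrite inE.
apply: bigcup_connected.
  exists x0 => y Ay; exists 0; first by rewrite /= in_itv /= ler01 lexx.
  by rewrite scale0r add0r subr0 scale1r.
move=> y Ay; apply: connected_continuous_connected; first exact: segment_connected.
apply: continuous_subspaceT => t.
have scale_y : {for t, continuous (fun t : R => t *: y)}.
  by apply: continuousZr_tmp; exact: cvg_id.
have scale_x0 : {for t, continuous (fun t : R => (1 - t) *: x0)}.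
  apply: continuousZr_tmp.
  by apply: continuousB; [exact: cst_continuous | exact: cvg_id].
have := continuousD scale_y scale_x0; exact.
Qed.

Lemma open_disjoint_closure (T : topologicalType) (P Q : set T) :
  open Q -> P `&` Q = set0 -> closure P `&` Q = set0.
Proof.
move=> oQ PQ; apply/seteqP; split=> // x [clPx Qx].
have [y] := clPx Q (open_nbhs_nbhs (conj oQ Qx)).
by rewrite PQ.
Qed.

Lemma connected_component_open_cover (T : topologicalType) (P Q : set T) x :
  open P -> open Q -> P `&` Q = set0 -> connected P -> P x ->
  connected_component (P `|` Q) x = P.
Proof.
move=> oP oQ PQ cP Px; apply/seteqP; split; last first.
  by apply: connected_component_max => // y Py; left.
have sepPQ : separated P Q.
  split; first exact: open_disjoint_closure.
  by rewrite setIC; apply: open_disjoint_closure; rewrite // setIC.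
have [//|compQ] := connected_subset sepPQ
  (@connected_component_sub _ (P `|` Q) x) (@component_connected _ (P `|` Q) x).
have Qx := compQ x (connected_component_refl (or_introl Px)).
by have : (P `&` Q) x by []; rewrite PQ.
Qed.

Lemma continuous_cubic (R : realType) (T : topologicalType) (a b c z : T -> R) :
  continuous a -> continuous b -> continuous c -> continuous z ->
  continuous (fun x => cubic (a x) (b x) (c x) (z x)).
Proof.
move=> ca cb cc cz x; have z2 := continuousM (cz x) (cz x).
have z3 := continuousM (cz x) z2.
have := continuousD (continuousD (continuousD z3 (continuousM z2 (ca x)))
  (continuousM (cz x) (cb x))) (cc x).
exact.
Qed.

Section UnitLocus.
Variable R : realType.
Variables f2 f4 f6 : {poly R}.

Definition unit_locus : set (R * R) :=
  [set w | `|w.1| <= 1 /\ cubic f2.[w.1] f4.[w.1] f6.[w.1] w.2 = 0].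

Lemma unit_locus_bounded : exists L, forall w, unit_locus w -> `|w.2| <= L.
Proof.
have [M2 hM2] := horner_bounded_unit f2.
have [M4 hM4] := horner_bounded_unit f4.
have [M6 hM6] := horner_bounded_unit f6.
exists (1 + (M2 + M4 + M6)) => w [w1 /cubic_root_bound]; move/le_trans; apply.
by rewrite lerD2l !lerD ?hM2 ?hM4 ?hM6.
Qed.

Lemma unit_locus_compact : compact unit_locus.
Proof.
have [L hL] := unit_locus_bounded.
have cfst : continuous (fun w : R * R => w.1) by move=> w; exact: cvg_fst.
have csnd : continuous (fun w : R * R => w.2) by move=> w; exact: cvg_snd.
have ch (p : {poly R}) : continuous (fun w : R * R => p.[w.1]).
  by move=> w; apply: continuous_comp; [exact: cfst | exact: continuous_horner].
apply: (@subclosed_compact _ unit_locus (`[-1, 1]%classic `*` `[- L, L]%classic) _ _ _).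
- apply: closedI.
    apply: (@preimage_closed _ _ (fun w : R * R => `|w.1|) [set r | r <= 1]).
      by move=> w _; apply: continuous_comp; [exact: cfst | exact: norm_continuous].
    exact: closed_le.
  apply: (@preimage_closed _ _ _ [set r | r = 0]); last exact: closed_eq.
  by move=> w _; apply: continuous_cubic.
- by apply: compact_setX; exact: segment_compact.
- move=> w lw; have w2 := hL w lw; case: lw => w1 _.
  by split; rewrite /= in_itv /= -ler_norml.
Qed.

End UnitLocus.

Section AboveCompact.
Variable R : realType.

Definition above_on (K : set (R * R)) (a b c : R) : Prop :=
  forall w, K w -> a * w.1 ^+ 2 + b * w.1 + c < w.2.

Lemma quadratic_unit_lt (a b c t e : R) : `|t| <= 1 ->
  `|a| < e / 3 -> `|b| < e / 3 -> `|c| < e / 3 -> a * t ^+ 2 + b * t + c < e.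
Proof.
move=> t1 ha hb hc.
have ta : `|a * t ^+ 2| <= `|a| by rewrite normrM normrX ler_piMr // exprn_ile1.
have tb : `|b * t| <= `|b| by rewrite normrM ler_piMr.
have := ler_norm (a * t ^+ 2); have := ler_norm (b * t); have := ler_norm c.
lra.
Qed.

Lemma open_above_on (S : topologicalType) (K : set (R * R)) (a b c : S -> R) :
  compact K -> (forall w, K w -> `|w.1| <= 1) ->
  continuous a -> continuous b -> continuous c ->
  open [set s | above_on K (a s) (b s) (c s)].
Proof.
move=> cK K1 ca cb cc; rewrite openE => s0 above0.
have [[w0 Kw0]|K0] := pselect (K !=set0); last first.
  by apply: nearW => s w Kw; exfalso; apply: K0; exists w.
pose P : {poly R} := a s0 *: 'X ^+ 2 + b s0 *: 'X + (c s0)%:P.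
have PE t : P.[t] = a s0 * t ^+ 2 + b s0 * t + c s0 by rewrite /P !hornerE.
pose g w := w.2 - P.[w.1].
have cg : {within K, continuous g}.
  apply: continuous_subspaceT => w.
  have cP : {for w, continuous (fun w : R * R => P.[w.1])}.
    by apply: continuous_comp; [exact: cvg_fst | exact: continuous_horner].
  have := continuousB (@cvg_snd _ _ (nbhs w.1) (nbhs w.2) _) cP; exact.
have [wmin /set_mem Kwmin gmin] := compact_EVT_min (ex_intro _ w0 Kw0) cK cg.
have e0 : 0 < g wmin by rewrite /g PE subr_gt0; exact: above0.
have e3 : 0 < g wmin / 3 by rewrite divr_gt0.
near=> s => w Kw.
have da : `|a s - a s0| < g wmin / 3.
  by rewrite distrC; near: s; exact: cvgr_dist_lt (ca s0) _ e3.
have db : `|b s - b s0| < g wmin / 3.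
  by rewrite distrC; near: s; exact: cvgr_dist_lt (cb s0) _ e3.
have dc : `|c s - c s0| < g wmin / 3.
  by rewrite distrC; near: s; exact: cvgr_dist_lt (cc s0) _ e3.
have := quadratic_unit_lt (K1 w Kw) da db dc.
have := gmin w (mem_set Kw); rewrite /g !PE.
lra.
Unshelve. all: by end_near.
Qed.

End AboveCompact.

Section Patches.
Variable R : realType.
Implicit Types (B : trigonal R) (s : 'rV[R]_3).

Definition affine_patch B : set (R * R) := unit_locus (tp2 B) (tp4 B) (tp6 B).

(* In the chart (u, v) = (1/x, y/x^2) at the fiber x = oo the section L reads
   v = a + b u + c u^2, hence the reversed roles of a and c below. *)
Definition infinity_patch B : set (R * R) :=
  unit_locus (reverse_poly 2 (tp2 B)) (reverse_poly 4 (tp4 B)) (reverse_poly 6 (tp6 B)).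

Lemma infinity_patch_at0 B v : infinity_patch B (0, v) <-> trig_eq_inf B v = 0.
Proof.
by rewrite /infinity_patch /unit_locus /= !horner_reverse_poly0 normr0; split=> [[]|].
Qed.

Lemma infinity_chart B u z : u != 0 ->
  cubic (reverse_poly 2 (tp2 B)).[u] (reverse_poly 4 (tp4 B)).[u]
        (reverse_poly 6 (tp6 B)).[u] z = u ^+ 6 * trig_eq B u^-1 (z / u ^+ 2).
Proof.
move=> u0; rewrite !horner_reverse_poly ?tp2_deg ?tp4_deg ?tp6_deg //.
by rewrite /cubic /trig_eq; field.
Qed.

Lemma reciprocal_quadratic_lt (a b c u z : R) : u != 0 ->
  (c * u ^+ 2 + b * u + a < z) = (a * u^-1 ^+ 2 + b * u^-1 + c < z / u ^+ 2).
Proof.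
move=> u0; have u2 : 0 < u^-1 ^+ 2 by rewrite exprn_even_gt0 // invr_eq0 u0 orbT.
rewrite -(ltr_pM2r u2); congr (_ < _); by field.
Qed.

Lemma B_above_patches B s : B_above B s <->
  above_on (affine_patch B) (sec_a s) (sec_b s) (sec_c s) /\
  above_on (infinity_patch B) (sec_c s) (sec_b s) (sec_a s).
Proof.
split=> [[above_aff above_inf]|[aff inf]]; split.
- by move=> w [_]; exact: above_aff.
- move=> [u z] patch_uz /=; have [u0|u0] := eqVneq u 0.
    move: patch_uz; rewrite u0 infinity_patch_at0 => /above_inf.
    by rewrite expr2 !mulr0 !add0r.
  rewrite reciprocal_quadratic_lt //; apply: above_aff.
  case: patch_uz => _ /=; rewrite infinity_chart // => /eqP.
  by rewrite mulf_eq0 expf_eq0 (negbTE u0) /= => /eqP.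
- move=> x y e; have [x1|x1] := leP `|x| 1; first exact: (aff (x, y)).
  have x0 : x != 0 by rewrite -normr_gt0 (lt_trans ltr01 x1).
  have /inf /= : infinity_patch B (x^-1, y * x^-1 ^+ 2).
    split; first by rewrite normfV invf_le1 ?ltW // (lt_trans ltr01 x1).
    rewrite /= infinity_chart ?invr_eq0 // invrK.
    by rewrite mulfK ?expf_neq0 ?invr_eq0 // e mulr0.
  by rewrite reciprocal_quadratic_lt ?invr_eq0 // invrK mulfK ?expf_neq0 ?invr_eq0.
- move=> v /infinity_patch_at0 /inf /=.
  by rewrite expr2 !mulr0 !add0r.
Qed.

End Patches.

Section Sections.
Variable R : realType.
Implicit Types (B : trigonal R) (s : 'rV[R]_3).

Definition above_sections B : set 'rV[R]_3 := [set s | B_above B s].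
Definition below_sections B : set 'rV[R]_3 := [set s | B_below B s].

Lemma sec_conv (s s' : 'rV[R]_3) (l : {i01 R}) :
  let s'' := (s : convex_lmodType 'rV[R]_3) <| l |> s' in
  [/\ sec_a s'' = l%:num * sec_a s + (1 - l%:num) * sec_a s',
      sec_b s'' = l%:num * sec_b s + (1 - l%:num) * sec_b s' &
      sec_c s'' = l%:num * sec_c s + (1 - l%:num) * sec_c s'].
Proof. by rewrite /sec_a /sec_b /sec_c /= !mxE. Qed.

Lemma convex_above_sections B : @convex_set R 'rV[R]_3 (above_sections B).
Proof.
move=> s s' l; rewrite !inE => -[aff inf] [aff' inf'].
have l0 : 0 <= l%:num by apply: ge0.
have l1 : l%:num <= 1 by apply: le1.
rewrite /above_sections /B_above /=.
have [-> -> ->] := sec_conv s s' l; split=> [x y e|v e].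
  have -> : (l%:num * sec_a s + (1 - l%:num) * sec_a s') * x ^+ 2 +
      (l%:num * sec_b s + (1 - l%:num) * sec_b s') * x +
      (l%:num * sec_c s + (1 - l%:num) * sec_c s') =
    l%:num * (sec_a s * x ^+ 2 + sec_b s * x + sec_c s) +
      (1 - l%:num) * (sec_a s' * x ^+ 2 + sec_b s' * x + sec_c s') by ring.
  exact: convex_combination_lt l0 l1 (aff x y e) (aff' x y e).
exact: convex_combination_lt l0 l1 (inf v e) (inf' v e).
Qed.

Lemma open_above_sections B : open (above_sections B).
Proof.
have -> : above_sections B =
    [set s | above_on (affine_patch B) (sec_a s) (sec_b s) (sec_c s)] `&`
    [set s | above_on (infinity_patch B) (sec_c s) (sec_b s) (sec_a s)].
  by apply/seteqP; split=> s /B_above_patches.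
have cont_coord j : continuous (fun s : 'rV[R]_3 => s ord0 j).
  exact: coord_continuous.
by apply: openI; apply: open_above_on;
  solve [exact: unit_locus_compact | by move=> w [] | exact: cont_coord].
Qed.

Lemma above_sections_nonempty B : above_sections B !=set0.
Proof.
have [L0 bound0] := unit_locus_bounded (tp2 B) (tp4 B) (tp6 B).
have [L1 bound1] := unit_locus_bounded (reverse_poly 2 (tp2 B))
  (reverse_poly 4 (tp4 B)) (reverse_poly 6 (tp6 B)).
set N := `|L0| + `|L1| + 1.
pose s := \row_(j < 3) if val j == 1%N then 0 else - N.
have N0 : 0 <= N by rewrite /N !addr_ge0.
have low (K : set (R * R)) L : (forall w, K w -> `|w.2| <= L) ->
    L < N -> above_on K (- N) 0 (- N).
  move=> bound LN w Kw; have := bound w Kw; rewrite ler_norml => /andP[wL _].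
  have : 0 <= N * w.1 ^+ 2 by rewrite mulr_ge0 ?sqr_ge0.
  lra.
have L0N : L0 < N by have := ler_norm L0; have := normr_ge0 L1; rewrite /N; lra.
have L1N : L1 < N by have := ler_norm L1; have := normr_ge0 L0; rewrite /N; lra.
exists s; apply/B_above_patches; rewrite /sec_a /sec_b /sec_c !mxE /=.
by split; [exact: low bound0 L0N | exact: low bound1 L1N].
Qed.

End Sections.

Section Reflection.
Variable R : realType.
Implicit Types (B : trigonal R) (s : 'rV[R]_3).

Fact size_oppr_le (p : {poly R}) n : (size p <= n)%N -> (size (- p) <= n)%N.
Proof. by rewrite size_polyN. Qed.

Definition reflect_trigonal B : trigonal R :=
  Trigonal (size_oppr_le (tp2_deg B)) (tp4_deg B) (size_oppr_le (tp6_deg B)).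

Lemma trig_eq_reflect B x y : trig_eq (reflect_trigonal B) x y = - trig_eq B x (- y).
Proof. by rewrite /trig_eq /= !hornerN; ring. Qed.

Lemma trig_eq_inf_reflect B v :
  trig_eq_inf (reflect_trigonal B) v = - trig_eq_inf B (- v).
Proof. by rewrite /trig_eq_inf /= !coefN; ring. Qed.

Lemma sec_oppr s :
  [/\ sec_a (- s) = - sec_a s, sec_b (- s) = - sec_b s & sec_c (- s) = - sec_c s].
Proof. by rewrite /sec_a /sec_b /sec_c !mxE. Qed.

Lemma B_below_reflect B s : B_below B s <-> B_above (reflect_trigonal B) (- s).
Proof.
rewrite /B_below /B_above; have [-> -> ->] := sec_oppr s.
have root_reflect x y : trig_eq (reflect_trigonal B) x y = 0 <-> trig_eq B x (- y) = 0.
  by rewrite trig_eq_reflect; split=> [/eqP|->]; rewrite ?oppr_eq0 ?oppr0 // => /eqP.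
have root_inf_reflect v :
    trig_eq_inf (reflect_trigonal B) v = 0 <-> trig_eq_inf B (- v) = 0.
  by rewrite trig_eq_inf_reflect; split=> [/eqP|->]; rewrite ?oppr_eq0 ?oppr0 // => /eqP.
split=> [[below_aff below_inf]|[above_aff above_inf]]; split.
- by move=> x y /root_reflect /below_aff; rewrite !mulNr; lra.
- by move=> v /root_inf_reflect /below_inf; lra.
- move=> x y; rewrite -[y]opprK => /root_reflect /above_aff; rewrite !mulNr; lra.
- by move=> v; rewrite -[v]opprK => /root_inf_reflect /above_inf; lra.
Qed.

Lemma below_sections_reflect B :
  below_sections B = -%R @^-1` above_sections (reflect_trigonal B).
Proof. by apply/seteqP; split=> s /B_below_reflect. Qed.

Lemma open_below_sections B : open (below_sections B).
Proof.
rewrite below_sections_reflect; apply: open_comp; last exact: open_above_sections.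
by move=> s _; exact: opp_continuous.
Qed.

Lemma below_sections_nonempty B : below_sections B !=set0.
Proof.
have [s above_s] := above_sections_nonempty (reflect_trigonal B).
by exists (- s); rewrite below_sections_reflect /= opprK.
Qed.

Lemma convex_below_sections B : @convex_set R 'rV[R]_3 (below_sections B).
Proof.
move=> s s' l; rewrite !inE below_sections_reflect /= => below_s below_s'.
rewrite conv_rowN.
have := convex_above_sections l (mem_set below_s) (mem_set below_s').
by rewrite inE.
Qed.

Lemma above_below_disjoint B : above_sections B `&` below_sections B = set0.
Proof.
apply/seteqP; split=> // s [[_ above_inf] [_ below_inf]].
have [v root] := cubic_has_root (tp2 B)`_2 (tp4 B)`_4 (tp6 B)`_6.
by have := lt_trans (above_inf v root) (below_inf v root); rewrite ltxx.
Qed.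

End Reflection.

Theorem lemmaA1 (R : realType) (B : trigonal R) :
  exists Splus Sminus : set 'rV[R]_3,
    [/\ Splus <> Sminus,
        (forall C : set 'rV[R]_3,
           (exists2 s, nonsep_set B s & C = connected_component (nonsep_set B) s)
           <-> (C = Splus \/ C = Sminus)),
        Splus !=set0 /\ Sminus !=set0,
        open Splus /\ open Sminus &
        @convex_set R 'rV[R]_3 Splus /\ @convex_set R 'rV[R]_3 Sminus].
Proof.
set A := above_sections B; set Z := below_sections B.
have AZ : A `&` Z = set0 := above_below_disjoint B.
have [oA oZ] : open A /\ open Z.
  by split; [exact: open_above_sections | exact: open_below_sections].
have [cvA cvZ] : @convex_set R 'rV[R]_3 A /\ @convex_set R 'rV[R]_3 Z.
  by split; [exact: convex_above_sections | exact: convex_below_sections].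
have compA s : A s -> connected_component (nonsep_set B) s = A.
  exact: connected_component_open_cover (convex_set_connected cvA).
have compZ s : Z s -> connected_component (nonsep_set B) s = Z.
  rewrite -[nonsep_set B]/(A `|` Z) setUC.
  by apply: connected_component_open_cover (convex_set_connected cvZ); rewrite // setIC.
have [[a Aa] [z Zz]] : A !=set0 /\ Z !=set0.
  by split; [exact: above_sections_nonempty | exact: below_sections_nonempty].
exists A, Z; split=> //.
- by move=> AZeq; move: AZ; rewrite -AZeq setIid => A0; rewrite A0 in Aa.
- move=> C; split=> [[s [As|Zs] ->]|[->|->]].
  + by left; exact: compA.
  + by right; exact: compZ.
  + by exists a; [left | rewrite compA].
  + by exists z; [right | rewrite compZ].
- by split; [exists a | exists z].
Qed.
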